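(* Assume $k\ge 2\cdot10^8$, the stream is in random order, and there exists a dense set $D\subseteq V$. Then with probability at least $0.01$ the output $S$ of Algorithm 1 satisfies $f(S)\ge0.50025\cdot\mathrm{OPT}$.
   Context: $V$ is a finite ground set with $|V|=n$; $f:2^V\to\mathbb{R}_{\ge0}$ is monotone, submodular and normalized ($f(\emptyset)=0$); $f(X\mid Y)=f(X\cup Y)-f(Y)$ and $f(e\mid Y)=f(\{e\}\mid Y)$. $k$ is a positive integer with $k\le n$, $\mathrm{OPT}=\max\{f(S):S\subseteq V,|S|\le k\}$. A stream is an ordering $e_1,\dots,e_n$ of $V$; ''random order'' means a uniformly random permutation. A set $D$ is dense if $|D|\le\eta k$ and $f(D)\ge\frac{1-\gamma}{2}\mathrm{OPT}$, where $\gamma=10^{-2}$, $\eta=5\cdot10^{-5}$. Algorithm 1 (knows $\mathrm{OPT}$): start with $S=\emptyset$; for $i=1,\dots,n$, add $e_i$ to $S$ if $|S|<k$ and either ($i\le 0.9n$ and $f(e_i\mid S)\ge\frac{100}{k}\mathrm{OPT}$) or ($i>0.9n$ and $f(e_i\mid S)\ge\frac{1}{10k}\mathrm{OPT}$); return $S$. *)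

From HB Require Import structures.
From mathcomp Require Import all_boot all_order all_fingroup all_algebra.
Set Implicit Arguments. Unset Strict Implicit. Unset Printing Implicit Defensive.
Import Order.TTheory GRing.Theory Num.Theory.
Local Open Scope ring_scope.

Section Defs.
Variables (R : realFieldType) (V : finType).

Definition fcond (f : {set V} -> R) (X Y : {set V}) : R := f (X :|: Y) - f Y.
Definition fmarg (f : {set V} -> R) (e : V) (Y : {set V}) : R := fcond f [set e] Y.

Definition monotone_set_fun (f : {set V} -> R) : Prop :=
  forall A B : {set V}, A \subset B -> f A <= f B.
Definition submodular (f : {set V} -> R) : Prop :=
  forall A B : {set V}, f (A :|: B) + f (A :&: B) <= f A + f B.
Definition normalized (f : {set V} -> R) : Prop := f set0 = 0.
Definition nonneg_set_fun (f : {set V} -> R) : Prop := forall A, 0 <= f A.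

(* OPT = max { f S : |S| <= k }  (the empty set is feasible and f >= 0) *)
Definition OPT (f : {set V} -> R) (k : nat) : R :=
  \big[Num.max/0]_(S : {set V} | (#|S| <= k)%N) f S.

Definition gamma : R := 1 / 100.
Definition eta : R := 5 / 10 ^+ 5.

Definition dense (f : {set V} -> R) (k : nat) (D : {set V}) : Prop :=
  (#|D|%:R <= eta * k%:R) /\ ((1 - gamma) / 2 * OPT f k <= f D).

(* One step of Algorithm 1 on element e = e_i (i is 1-based), n = |V|. *)
Definition alg1_step (f : {set V} -> R) (k n : nat) (opt : R)
    (S : {set V}) (i : nat) (e : V) : {set V} :=
  if (#|S| < k)%N &&
     (if (i%:R : R) <= 9 / 10 * n%:R then 100 / k%:R * opt <= fmarg f e S
      else opt / (10 * k%:R) <= fmarg f e S)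
  then e |: S else S.

Fixpoint alg1_run (f : {set V} -> R) (k n : nat) (opt : R)
    (i : nat) (S : {set V}) (s : seq V) : {set V} :=
  match s with
  | [::] => S
  | e :: s' => alg1_run f k n opt i.+1 (alg1_step f k n opt S i e) s'
  end.

(* Algorithm 1 (knowing OPT) on stream s = e_1, ..., e_n. *)
Definition algorithm1 (f : {set V} -> R) (k : nat) (s : seq V) : {set V} :=
  alg1_run f k #|V| (OPT f k) 1 set0 s.

(* The stream induced by a permutation sigma of V: a uniformly random
   sigma yields a uniformly random ordering of V. *)
Definition stream_of (sigma : {perm V}) : seq V := map sigma (enum V).

End Defs.

From Pilot Require Import Defs.
From HB Require Import structures.
From mathcomp Require Import all_boot all_order all_fingroup all_algebra.
From mathcomp Require Import ring lra zify.
Import Order.TTheory GRing.Theory Num.Theory.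
Local Open Scope ring_scope.
Set Implicit Arguments. Unset Strict Implicit.

(* Let P be the set of the first floor(0.9 n) elements of the stream, S1 the
   solution at the end of the first phase and O an optimal solution.

   Deterministically: every element taken in the first phase gains 100 OPT/k,
   so S1 has at most k/100 elements, and every element of D :&: P it
   rejected was worth less than 100 OPT/k; as |D| <= 5e-5 k this gives
   f(S1) >= f(D :&: P) - OPT/200.  If the final solution is full, the second
   phase added at least 0.99 k elements worth OPT/(10k) each; otherwise every
   element was rejected, so for Y = (O :\: D) :\: P we get
   f(S) >= f(Y :|: D) - OPT/200 - |Y| OPT/(10k).  Either way f(S) >= 0.50025 OPT
   as soon as f(D :&: P) >= 13/32 OPT and f(Y :|: D) - |Y| OPT/(10k) >= 0.50525 OPT.

   In a random order P is a uniform random subset of size floor(0.9 n).  The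
   sampling lemma for submodular functions gives E f(D :&: P) >= 0.899 f(D),
   so by reverse Markov the first event has probability at least 2/5.
   Conditionally on D :&: P, every element of O :\: D misses P with
   probability at least 0.09, and the sampling lemma for f contracted by D,
   followed by reverse Markov, gives the second event conditional probability
   at least 1/20.  Hence both events happen with probability at least 1/50. *)

Section Submodular.
Variables (R : realFieldType) (V : finType) (f : {set V} -> R).
Hypotheses (fmono : monotone_set_fun f) (fsub : submodular f).

Lemma fmarg_ge0 e (S : {set V}) : 0 <= fmarg f e S.
Proof. by rewrite /fmarg /fcond subr_ge0; apply: fmono; apply: subsetUr. Qed.

Lemma fmarg_mem e (S : {set V}) : e \in S -> fmarg f e S = 0.
Proof.
by move=> eS; rewrite /fmarg /fcond (setUidPr _) ?subrr // sub1set.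
Qed.

Lemma fmargS e (A B : {set V}) : A \subset B -> fmarg f e B <= fmarg f e A.
Proof.
move=> AB; have [eB|eB] := boolP (e \in B); first by rewrite fmarg_mem // fmarg_ge0.
have eUB : ([set e] :|: A) :|: B = [set e] :|: B by rewrite -setUA (setUidPr AB).
have eIB : ([set e] :|: A) :&: B = A.
  rewrite setIUl (setIidPl AB); apply/setUidPr/subsetP => x.
  by rewrite !inE => /andP[/eqP -> eB']; rewrite eB' in eB.
have := fsub ([set e] :|: A) B; rewrite eUB eIB /fmarg /fcond; lra.
Qed.

Lemma f_setU_le_sum_fmarg (S X : {set V}) :
  f (S :|: X) <= f S + \sum_(e in X) fmarg f e S.
Proof.
have [n] := ubnP #|X|; elim: n X => // n IH X.
have [->|[x xX]] := set_0Vmem X => cardX; first by rewrite setU0 big_set0 addr0.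
rewrite -(setD1K xX) big_setU1 ?inE ?eqxx //=.
have IHx : f (S :|: X :\ x) <= f S + \sum_(e in X :\ x) fmarg f e S.
  by apply: IH; move: cardX; rewrite (cardsD1 x X) xX.
have := fmargS x (subsetUl S (X :\ x)).
rewrite {1}/fmarg /fcond setUA [_ :|: S]setUC -setUA; lra.
Qed.

Lemma f_setU_le_card (S X : {set V}) c :
  (forall e, e \in X -> fmarg f e S <= c) -> f (S :|: X) <= f S + #|X|%:R * c.
Proof.
move=> le_c; apply: le_trans (f_setU_le_sum_fmarg S X) _; rewrite lerD2l.
rewrite -sum1_card natr_sum mulr_suml; apply: ler_sum => e eX.
by rewrite mul1r le_c.
Qed.

End Submodular.

Definition contraction (R : realFieldType) (V : finType) (f : {set V} -> R) (D X : {set V}) : R :=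
  f (X :|: D) - f D.

Lemma fmarg_contraction (R : realFieldType) (V : finType) (f : {set V} -> R) D x (X : {set V}) :
  fmarg (contraction f D) x X = fmarg f x (X :|: D).
Proof. by rewrite /fmarg /fcond /contraction setUA; ring. Qed.

(* Probabilities over a finite uniform space I are written as counts
   [\sum_(i | P i) 1]. *)
Section Averaging.
Variables (R : realFieldType) (I : finType).

Lemma sum_if_const (A B : pred I) (c : R) :
  \sum_(i | A i) (if B i then c else 0) = c * \sum_(i | A i && B i) 1.
Proof. by rewrite mulr_sumr -big_mkcondr; apply: eq_bigr => i _; rewrite mulr1. Qed.

Lemma reverse_markov (A : pred I) (h : I -> R) (M m c t : R) :
  (forall i, A i -> h i <= M) -> m * \sum_(i | A i) 1 <= \sum_(i | A i) h i ->
  c < M -> t * (M - c) <= m - c ->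
  t * \sum_(i | A i) 1 <= \sum_(i | A i && (c <= h i)) 1.
Proof.
move=> h_le_M mean_ge c_lt_M t_le.
have pointwise :
    \sum_(i | A i) h i - c * \sum_(i | A i) 1 <= (M - c) * \sum_(i | A i && (c <= h i)) 1.
  rewrite -sum_if_const mulr_sumr -sumrB; apply: ler_sum => i Ai.
  by have := h_le_M i Ai; case: ifP => c_le; lra.
have scaled : t * (M - c) * \sum_(i | A i) 1 <= (m - c) * \sum_(i | A i) 1.
  by apply: ler_wpM2r => //; apply: sumr_ge0.
rewrite -(ler_pM2l (_ : 0 < M - c)) ?subr_gt0 //.
by move: scaled; rewrite [(M - c) * _]mulrA [(M - c) * t]mulrC mulrBl; lra.
Qed.

Lemma sum_condition_fibers (J : finType) (h : I -> J) (E : pred J) (B : pred I) (t : R) :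
  (forall j, E j -> t * \sum_(i | h i == j) 1 <= \sum_(i | (h i == j) && B i) 1) ->
  t * \sum_(i | E (h i)) 1 <= \sum_(i | E (h i) && B i) 1.
Proof.
move=> cond.
have split_all : \sum_(i | E (h i)) (1 : R) = \sum_(j | E j) \sum_(i | h i == j) 1.
  rewrite (partition_big h E) //; apply: eq_bigr => j Ej; apply: eq_bigl => i.
  by case: eqP => [->|_]; rewrite ?Ej ?andbF.
have split_B : \sum_(i | E (h i) && B i) (1 : R) = \sum_(j | E j) \sum_(i | (h i == j) && B i) 1.
  rewrite (partition_big h E) => [|i /andP[]//]; apply: eq_bigr => j Ej; apply: eq_bigl => i.
  by case: eqP => [->|_]; rewrite ?Ej ?andbT ?andbF.
by rewrite split_all split_B mulr_sumr; apply: ler_sum.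
Qed.

Lemma sum_card_setI (V : finType) (A : pred I) (Rs : I -> {set V}) (Q : {set V}) :
  \sum_(i | A i) (#|Q :&: Rs i|%:R : R) = \sum_(x in Q) \sum_(i | A i && (x \in Rs i)) 1.
Proof.
transitivity (\sum_(i | A i) \sum_(x in Q) (if x \in Rs i then (1 : R) else 0)).
  apply: eq_bigr => i _; rewrite -sum1_card natr_sum -big_mkcondr.
  by apply: eq_bigl => x; rewrite in_setI.
by rewrite exchange_big; apply: eq_bigr => x _; rewrite sum_if_const mul1r.
Qed.

(* Feige-Mirrokni-Vondrak sampling lemma.  Remove one element x of Q at a
   time: whenever x is sampled, adding it back gains at least
   g Q - g (Q :\ x) by diminishing returns. *)
Lemma sampling_lemma (V : finType) (A : pred I) (Rs : I -> {set V}) (g : {set V} -> R)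
    (q : R) (Q : {set V}) :
  g set0 = 0 ->
  (forall x (X Y : {set V}), X \subset Y -> fmarg g x Y <= fmarg g x X) ->
  (forall x, x \in Q -> \sum_(i | A i && (x \in Rs i)) 1 = q * \sum_(i | A i) 1) ->
  q * (\sum_(i | A i) 1) * g Q <= \sum_(i | A i) g (Q :&: Rs i).
Proof.
move=> g0 g_dr.
have [n] := ubnP #|Q|; elim: n Q => // n IH Q.
have [->|[x xQ]] := set_0Vmem Q => cardQ freq.
  by rewrite g0 mulr0 big1 // => i _; rewrite set0I g0.
set Q' := Q :\ x; have eQ : Q = x |: Q' by rewrite setD1K.
have IHQ' : q * (\sum_(i | A i) 1) * g Q' <= \sum_(i | A i) g (Q' :&: Rs i).
  apply: IH => [|y /setD1P[_ /freq] //].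
  by move: cardQ; rewrite (cardsD1 x Q) xQ.
have gain i : g (Q' :&: Rs i) + (if x \in Rs i then g Q - g Q' else 0) <= g (Q :&: Rs i).
  have [xR|xR] := boolP (x \in Rs i); last first.
    rewrite addr0 eQ setIUl (_ : [set x] :&: Rs i = set0) ?set0U //.
    by apply/setP => z; rewrite !inE; case: eqP => // ->; rewrite (negbTE xR).
  rewrite eQ setIUl (_ : [set x] :&: Rs i = [set x]); last by apply/setIidPl; rewrite sub1set.
  by have := g_dr x _ _ (subsetIl Q' (Rs i)); rewrite /fmarg /fcond; lra.
have : \sum_(i | A i) (g (Q' :&: Rs i) + (if x \in Rs i then g Q - g Q' else 0))
       <= \sum_(i | A i) g (Q :&: Rs i) by apply: ler_sum => i _; apply: gain.
rewrite big_split /= sum_if_const freq //.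
move: IHQ'; set S := \sum_(i | A i) (1 : R); set a := \sum_(i | A i) g (Q' :&: Rs i).
by move=> IHQ' h; nra.
Qed.

Lemma ler_count_sub (A B : pred I) :
  (forall i, A i -> B i) -> \sum_(i | A i) (1 : R) <= \sum_(i | B i) 1.
Proof.
move=> AB; rewrite big_mkcond [leRHS]big_mkcond /=; apply: ler_sum => i _.
by case: ifP => [/AB ->|_] //; case: ifP.
Qed.

Lemma card_ratio_ge (P : pred I) (t : R) : (0 < #|I|)%N ->
  t * \sum_(i : I) 1 <= \sum_(i | P i) 1 -> t <= #|[set i | P i]|%:R / #|I|%:R.
Proof.
move=> I_gt0 t_le; rewrite ler_pdivlMr ?ltr0n //.
have -> : #|I|%:R = \sum_(i : I) (1 : R) by rewrite -sum1_card natr_sum.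
have -> : #|[set i | P i]|%:R = \sum_(i | P i) (1 : R).
  by rewrite -sum1_card natr_sum; apply: eq_bigl => i; rewrite inE.
exact: t_le.
Qed.

End Averaging.

Section Algorithm.
Variables (R : realFieldType) (V : finType) (f : {set V} -> R).
Hypotheses (fmono : monotone_set_fun f) (fsub : submodular f).
Variables (k n : nat) (opt : R).

Definition threshold (i : nat) : R :=
  if (i%:R : R) <= 9 / 10 * n%:R then 100 / k%:R * opt else opt / (10 * k%:R).

Lemma alg1_stepE (S : {set V}) i e : alg1_step f k n opt S i e =
  if (#|S| < k)%N && (threshold i <= fmarg f e S) then e |: S else S.
Proof. by rewrite /alg1_step /threshold; case: (_ <= _ * _). Qed.

Local Notation run := (alg1_run f k n opt).

Lemma alg1_run_cat i (S : {set V}) s1 s2 :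
  run i S (s1 ++ s2) = run (i + size s1) (run i S s1) s2.
Proof. by elim: s1 i S => [|e s1 IH] i S /=; rewrite ?addn0 // IH addSnnS. Qed.

Lemma alg1_run_sub i (S : {set V}) s : S \subset run i S s.
Proof.
elim: s i S => [|e s IH] i S /=; first exact: subxx.
apply: subset_trans (IH _ _); rewrite alg1_stepE; case: ifP => _ //.
exact: subsetUr.
Qed.

Lemma alg1_run_card i (S : {set V}) s : (#|S| <= k)%N -> (#|run i S s| <= k)%N.
Proof.
elim: s i S => [|e s IH] i S //= cardS; apply: IH; rewrite alg1_stepE.
by case: ifP => [/andP[ltSk _]|//]; rewrite cardsU1; case: (e \in S) => /=; lia.
Qed.

Lemma alg1_run_gain t i (S : {set V}) s :
  (forall j, (j < size s)%N -> t <= threshold (i + j)) ->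
  f S + t * (#|run i S s|%:R - #|S|%:R) <= f (run i S s).
Proof.
elim: s i S => [|e s IH] i S /= t_le; first by rewrite subrr mulr0 addr0.
have t_le_i := t_le 0%N isT; rewrite addn0 in t_le_i.
have t_le' j : (j < size s)%N -> t <= threshold (i.+1 + j).
  by move=> lt_j; rewrite addSnnS; apply: t_le.
have := IH i.+1 (alg1_step f k n opt S i e) t_le'.
rewrite alg1_stepE; case: ifP => [/andP[_ gain]|_]; last lra.
have [eS|eS] := boolP (e \in S); first by rewrite (setUidPr _) ?sub1set //; lra.
rewrite cardsU1 (negbTE eS) natrD /=; move: gain; rewrite /fmarg /fcond; lra.
Qed.

Lemma alg1_run_rejected i (S : {set V}) s j e0 : (j < size s)%N ->
  nth e0 s j \in run i S s \/
  exists2 St : {set V}, St \subset run i S s &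
    (k <= #|St|)%N \/ fmarg f (nth e0 s j) St < threshold (i + j).
Proof.
elim: s i S j => [|e s IH] i S [|j] //= lt_j; last by rewrite -addSnnS; apply: IH.
rewrite addn0; have := alg1_run_sub i.+1 (alg1_step f k n opt S i e) s.
rewrite alg1_stepE; case: ifP => [_ sub|].
  by left; apply: (subsetP sub); rewrite !inE eqxx.
move=> /negbT; rewrite negb_and -leqNgt -ltNge => rej sub.
by right; exists S => //; apply/orP.
Qed.

Lemma alg1_run_unsaturated i (S : {set V}) s j e0 :
  0 <= threshold (i + j) -> (j < size s)%N -> (#|run i S s| < k)%N ->
  fmarg f (nth e0 s j) (run i S s) <= threshold (i + j).
Proof.
move=> thr_ge0 lt_j lt_k; case: (alg1_run_rejected i S e0 lt_j) => [|[St sub]].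
  by move=> /(fmarg_mem f) ->.
case=> [le_k|lt_thr]; first by have := subset_leq_card sub; lia.
by apply: le_trans (fmargS fmono fsub _ sub) _; apply: ltW.
Qed.

End Algorithm.

Lemma count_index_lt (T : eqType) (s : seq T) m : uniq s ->
  count (fun y => (index y s < m)%N) s = minn m (size s).
Proof.
elim: s m => [|x s IH] m /=; first by rewrite minn0.
case/andP=> xs us; rewrite eqxx /=; case: m => [|m].
  by rewrite min0n; apply/eqP; rewrite -leqn0 leqNgt -has_count; apply/hasP => -[y _ /=]; case: ifP.
rewrite (@eq_in_count _ _ (fun y => (index y s < m)%N)); last first.
  by move=> y ys /=; case: eqP => // xy; rewrite xy ys in xs.
by rewrite IH //; lia.
Qed.

Lemma card_index_enum_lt (V : finType) m :
  #|[set y : V | (index y (enum V) < m)%N]| = minn m #|V|.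
Proof.
rewrite cardT -(count_index_lt m (enum_uniq V)) -sum1_count -sum1_card big_enum_cond /=.
by apply: eq_bigl => y; rewrite inE.
Qed.

Section Prefix.
Variables (V : finType) (N : nat).

Lemma size_stream_of (s : {perm V}) : size (stream_of s) = #|V|.
Proof. by rewrite size_map -cardE. Qed.

Lemma index_stream_of (s : {perm V}) x : index x (stream_of s) = index ((s^-1)%g x) (enum V).
Proof. by rewrite /stream_of -{1}(permKV s x) index_map //; apply: perm_inj. Qed.

Lemma index_stream_of_lt (s : {perm V}) x : (index x (stream_of s) < #|V|)%N.
Proof. by rewrite index_stream_of cardE index_mem mem_enum. Qed.

Lemma nth_index_stream_of (s : {perm V}) x e0 : nth e0 (stream_of s) (index x (stream_of s)) = x.
Proof. by apply: nth_index; rewrite -index_mem size_stream_of index_stream_of_lt. Qed.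

Definition prefix_set (s : {perm V}) : {set V} := [set x | (index x (stream_of s) < N)%N].

Lemma mem_prefix_set_mul s t x : (x \in prefix_set (s * t)%g) = ((t^-1)%g x \in prefix_set s).
Proof. by rewrite !inE !index_stream_of invMg permM. Qed.

Lemma card_prefix_set s : (N <= #|V|)%N -> #|prefix_set s| = N.
Proof.
move=> le_N; rewrite -[RHS](minn_idPl le_N) -card_index_enum_lt.
have -> : prefix_set s = s @: [set y | (index y (enum V) < N)%N].
  apply/setP => x; rewrite inE index_stream_of; apply/idP/imsetP => [lt_N|[y]].
    by exists ((s^-1)%g x); rewrite ?inE ?permKV.
  by rewrite inE => lt_N ->; rewrite permK.
by rewrite card_imset //; apply: perm_inj.
Qed.

Variable R : realFieldType.

(* Right multiplication by the transposition of x, y (both outside D)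
   preserves D :&: prefix_set s and swaps the roles of x and y. *)
Lemma count_notin_prefix_swap (D T : {set V}) x y : x \notin D -> y \notin D ->
  \sum_(s | (D :&: prefix_set s == T) && (x \notin prefix_set s)) (1 : R) =
  \sum_(s | (D :&: prefix_set s == T) && (y \notin prefix_set s)) 1.
Proof.
move=> xD yD; rewrite (reindex_inj (@mulIg _ (tperm x y))) /=.
apply: eq_bigl => s; rewrite mem_prefix_set_mul tpermV tpermL.
congr ((_ == T) && _); apply/setP => z; rewrite !in_setI mem_prefix_set_mul tpermV.
have [zD|//] := boolP (z \in D); rewrite tpermD //.
  by apply: contraNneq xD => ->.
by apply: contraNneq yD => ->.
Qed.

Lemma count_notin_prefix (D T : {set V}) x : (N <= #|V|)%N -> x \notin D ->
  #|~: D|%:R * \sum_(s | (D :&: prefix_set s == T) && (x \notin prefix_set s)) (1 : R) =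
  (#|~: D|%:R - N%:R + #|T|%:R) * \sum_(s | D :&: prefix_set s == T) 1.
Proof.
move=> le_N xD.
have double_count :
  \sum_(y in ~: D) \sum_(s | (D :&: prefix_set s == T) && (y \notin prefix_set s)) (1 : R) =
  \sum_(s | D :&: prefix_set s == T) (#|~: D :\: prefix_set s|%:R : R).
  rewrite (exchange_big_dep (fun s => D :&: prefix_set s == T)) /=; last by move=> ? ? _ /andP[].
  apply: eq_bigr => s DP; rewrite -sum1_card natr_sum; apply: eq_bigl => y.
  by rewrite in_setD DP /= andbC.
have swap :
    \sum_(y in ~: D) \sum_(s | (D :&: prefix_set s == T) && (y \notin prefix_set s)) (1 : R) =
    #|~: D|%:R * \sum_(s | (D :&: prefix_set s == T) && (x \notin prefix_set s)) 1.
  rewrite (eq_bigr (fun _ => \sum_(s | (D :&: prefix_set s == T) && (x \notin prefix_set s)) 1)).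
    by rewrite sumr_const mulr_natl.
  by move=> y; rewrite inE => yD; apply: count_notin_prefix_swap.
rewrite -swap double_count mulr_sumr; apply: eq_bigr => s /eqP DP; rewrite mulr1.
have := cardsID (prefix_set s) (~: D); have := cardsID D (prefix_set s).
rewrite [prefix_set s :&: D]setIC DP [~: D :&: _]setIC -setDE card_prefix_set // => cardN cardC.
have : (#|T| + #|prefix_set s :\: D|)%:R = N%:R :> R by rewrite cardN.
have : (#|prefix_set s :\: D| + #|~: D :\: prefix_set s|)%:R = #|~: D|%:R :> R by rewrite cardC.
by rewrite !natrD; lra.
Qed.

(* The probability that a given element outside D misses the prefix,
   conditionally on D :&: prefix_set s = T. *)
Definition miss_rate (D T : {set V}) : R := (#|~: D|%:R - N%:R + #|T|%:R) / #|~: D|%:R.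

Lemma freq_notin_prefix (D T : {set V}) x : (N <= #|V|)%N -> x \notin D ->
  \sum_(s | (D :&: prefix_set s == T) && (x \in ~: prefix_set s)) (1 : R) =
  miss_rate D T * \sum_(s | D :&: prefix_set s == T) 1.
Proof.
move=> le_N xD; rewrite /miss_rate; have cardC_gt0 : 0 < #|~: D|%:R :> R.
  by rewrite ltr0n; apply/card_gt0P; exists x; rewrite inE.
rewrite mulrAC -(count_notin_prefix _ le_N xD) mulrC mulKf ?gt_eqF //.
by apply: eq_bigl => s; rewrite in_setC.
Qed.

Lemma freq_mem_prefix x : (N <= #|V|)%N ->
  \sum_(s | x \in prefix_set s) (1 : R) = N%:R / #|V|%:R * \sum_(s : {perm V}) 1.
Proof.
move=> le_N; have := freq_notin_prefix (D := set0) set0 le_N (x := x) (negbT (in_set0 x)).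
rewrite /miss_rate setC0 cardsT cards0 addr0.
under eq_bigl => s do rewrite set0I eqxx /= in_setC.
under [in X in _ = _ * X]eq_bigl => s do rewrite set0I eqxx.
have cardV_gt0 : 0 < #|V|%:R :> R by rewrite ltr0n; apply/card_gt0P; exists x.
rewrite [\sum_(s : {perm V}) 1](bigID (fun s => x \in prefix_set s)) /=.
set Sin := \sum_(s | x \in prefix_set s) _; set Sout := \sum_(s | x \notin prefix_set s) _.
have -> : N%:R / #|V|%:R = 1 - (#|V|%:R - N%:R) / #|V|%:R :> R.
  by field; rewrite gt_eqF.
by move=> Sout_eq; rewrite mulrBl mul1r -Sout_eq; ring.
Qed.

End Prefix.

Arguments miss_rate {V} N {R} D T.

Section PrefixSampling.
Variables (R : realFieldType) (V : finType) (f : {set V} -> R) (N : nat).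
Hypotheses (fmono : monotone_set_fun f) (fsub : submodular f) (f0 : normalized f)
  (le_N : (N <= #|V|)%N).

Lemma sum_f_setI_prefix_ge (X : {set V}) :
  N%:R / #|V|%:R * (\sum_(s : {perm V}) 1) * f X <=
  \sum_(s : {perm V}) f (X :&: prefix_set N s).
Proof.
apply: (sampling_lemma (A := xpredT)) => // [x Y Z|x _]; first exact: fmargS.
exact: freq_mem_prefix.
Qed.

Lemma prefix_value_likely (X : {set V}) (o : R) :
  899 / 1000 <= N%:R / #|V|%:R :> R -> 0 < o -> 99 / 200 * o <= f X ->
  2 / 5 * \sum_(s : {perm V}) (1 : R) <=
  \sum_(s | 13 / 32 * o <= f (X :&: prefix_set N s)) 1.
Proof.
move=> q_ge o_gt0 fX_ge; set q := N%:R / #|V|%:R in q_ge *.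
apply: (reverse_markov (A := xpredT) (M := f X) (m := q * f X)) => [s _|||].
- by apply: fmono; apply: subsetIl.
- by rewrite mulrAC; apply: sum_f_setI_prefix_ge.
- lra.
- have : 0 <= (q - 899 / 1000) * f X by apply: mulr_ge0; lra.
  lra.
Qed.

Lemma sum_contraction_late_ge (D T Q : {set V}) : Q \subset ~: D ->
  miss_rate N D T * (\sum_(s | D :&: prefix_set N s == T) 1) * contraction f D Q
  <= \sum_(s | D :&: prefix_set N s == T) contraction f D (Q :&: ~: prefix_set N s).
Proof.
move=> QD; apply: sampling_lemma => [|x X Y XY|x /(subsetP QD)].
- by rewrite /contraction set0U subrr.
- by rewrite !fmarg_contraction; apply: fmargS => //; apply: setSU.
- by rewrite inE => xD; apply: freq_notin_prefix.
Qed.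

Lemma sum_card_late (D T Q : {set V}) : Q \subset ~: D ->
  \sum_(s | D :&: prefix_set N s == T) (#|Q :&: ~: prefix_set N s|%:R : R) =
  #|Q|%:R * (miss_rate N D T * \sum_(s | D :&: prefix_set N s == T) 1).
Proof.
move=> QD; rewrite sum_card_setI mulr_natl -sumr_const; apply: eq_bigr => x xQ.
by apply: freq_notin_prefix => //; move: xQ => /(subsetP QD); rewrite inE.
Qed.

End PrefixSampling.

Lemma ten_exp5 (R : realFieldType) : (10 : R) ^+ 5 = 100 * 1000.
Proof. by rewrite !exprS expr0; lra. Qed.

Lemma ten_exp8 (R : realFieldType) : (10 : R) ^+ 8 = 100 * 1000 * 1000.
Proof. by rewrite !exprS expr0; lra. Qed.

Section Analysis.
Variables (R : realFieldType) (V : finType) (f : {set V} -> R) (k : nat).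
Hypotheses (f_ge0 : nonneg_set_fun f) (fmono : monotone_set_fun f)
  (fsub : submodular f) (f0 : normalized f) (k_gt0 : (0 < k)%N) (k_le : (k <= #|V|)%N).

Local Notation o := (OPT f k).
Local Notation tau1 := (100 / k%:R * o).
Local Notation tau2 := (o / (10 * k%:R)).
Local Notation thr := (threshold k #|V| o).
Local Notation stream := (@stream_of V).

Lemma OPT_ge (S : {set V}) : (#|S| <= k)%N -> f S <= o.
Proof. by move=> cardS; apply: (le_bigmax_cond _ _ cardS). Qed.

Lemma OPT_ge0 : 0 <= o.
Proof. by have := @OPT_ge set0; rewrite cards0 f0; apply. Qed.

Lemma OPT_attained : exists2 O : {set V}, (#|O| <= k)%N & f O = o.
Proof.
have card0 : (#|(set0 : {set V})| <= k)%N by rewrite cards0.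
have := @bigmax_eq_arg _ _ _ 0 set0 (fun S => (#|S| <= k)%N) f card0 (fun S _ => f_ge0 S).
by case: arg_maxP => // O cardO _ eqO; exists O => //; rewrite /OPT eqO.
Qed.

Definition N1 : nat := (9 * #|V|) %/ 10.

Lemma N1_le : (N1 <= #|V|)%N.
Proof. by have := leq_divM (9 * #|V|) 10; rewrite /N1; lia. Qed.

Lemma N1_bounds : 10 * N1%:R <= 9 * #|V|%:R :> R /\ 9 * #|V|%:R <= 10 * N1%:R + 9 :> R.
Proof.
rewrite -!natrM -natrD !ler_nat; split; first by rewrite mulnC leq_divM.
by have := @ltn_ceil (9 * #|V|) 10 isT; rewrite /N1; lia.
Qed.

Lemma le_N1 i : ((i%:R : R) <= 9 / 10 * #|V|%:R) = (i <= N1)%N.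
Proof.
have [N1_lo N1_hi] := N1_bounds.
apply/idP/idP => [le_i|le_iN1].
  rewrite leqNgt; apply/negP => lt_N1i.
  have : N1.+1%:R <= (i%:R : R) by rewrite ler_nat.
  by rewrite -addn1 natrD; lra.
have : (i%:R : R) <= N1%:R by rewrite ler_nat.
lra.
Qed.

Lemma thresholdE_first i : (i <= N1)%N -> thr i = tau1.
Proof. by rewrite /threshold le_N1 => ->. Qed.

Lemma thresholdE_second i : (N1 < i)%N -> thr i = tau2.
Proof. by move=> lt_i; rewrite /threshold le_N1 leqNgt lt_i. Qed.

Lemma k_gt0_real : 0 < k%:R :> R.
Proof. by rewrite ltr0n. Qed.

Lemma tau2_ge0 : 0 <= tau2.
Proof. by apply: divr_ge0; [apply: OPT_ge0 | have := k_gt0_real; lra]. Qed.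

Lemma threshold_bounds i : tau2 <= thr i /\ thr i <= tau1.
Proof.
have tau2_le_tau1 : tau2 <= tau1.
  have o_div_k : 0 <= o / k%:R by apply: divr_ge0; [apply: OPT_ge0 | apply: ltW k_gt0_real].
  have -> : tau1 = 1000 * tau2 by field; apply/eqP; have := k_gt0_real; lra.
  by have := tau2_ge0; lra.
case: (leqP i N1) => [/thresholdE_first|/thresholdE_second] ->; last by split.
by have := tau2_le_tau1; split.
Qed.

Definition first_phase (s : {perm V}) : {set V} :=
  alg1_run f k #|V| o 1 set0 (take N1 (stream s)).

Lemma algorithm1_phases s : algorithm1 f k (stream s) =
  alg1_run f k #|V| o (1 + N1) (first_phase s) (drop N1 (stream s)).
Proof.
rewrite /algorithm1 -{1}(cat_take_drop N1 (stream s)) alg1_run_cat.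
by rewrite size_takel // size_stream_of N1_le.
Qed.

Lemma first_phase_card s : (#|first_phase s| <= k)%N.
Proof. by apply: alg1_run_card; rewrite cards0. Qed.

Lemma first_phase_gain s : tau1 * #|first_phase s|%:R <= f (first_phase s).
Proof.
have := @alg1_run_gain _ _ f k #|V| o tau1 1 set0 (take N1 (stream s)).
rewrite f0 cards0 subr0 add0r; apply => j.
rewrite size_takel ?size_stream_of ?N1_le // => lt_j.
by rewrite thresholdE_first // add1n.
Qed.

Lemma first_phase_small s : 0 < o -> 100 * #|first_phase s|%:R <= k%:R :> R.
Proof.
move=> o_gt0; have := first_phase_gain s.
have le_o := OPT_ge (first_phase_card s); have k_gt0' := k_gt0_real.
set x := #|first_phase s|%:R => gain.
have : k%:R * (tau1 * x) <= k%:R * o by rewrite ler_pM2l //; lra.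
have -> : k%:R * (tau1 * x) = 100 * x * o by field; rewrite gt_eqF.
by rewrite ler_pM2r.
Qed.

Lemma first_phase_prefix (X : {set V}) s : 0 < o ->
  f (X :&: prefix_set N1 s) <= f (first_phase s) + #|X|%:R * tau1.
Proof.
move=> o_gt0; have small := first_phase_small s o_gt0; have k_gt0' := k_gt0_real.
have lt_k : (#|first_phase s| < k)%N.
  by rewrite -(ltr_nat R); have : 0 <= #|first_phase s|%:R :> R by []; lra.
apply: le_trans (fmono (subsetUr (first_phase s) _)) _.
apply: le_trans (f_setU_le_card fmono fsub (c := tau1) _) _ => [e|].
  rewrite !inE => /andP[_ lt_e].
  have lt_e' : (index e (stream s) < size (take N1 (stream s)))%N.
    by rewrite size_takel ?size_stream_of ?N1_le.
  have := alg1_run_unsaturated fmono fsub e _ lt_e' lt_k.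
  rewrite nth_take // nth_index_stream_of thresholdE_first ?add1n //.
  by apply; apply: mulr_ge0; [apply: divr_ge0; lra | apply: OPT_ge0].
rewrite lerD2l ler_wpM2r ?ler_nat ?subset_leq_card ?subsetIl //.
by apply: mulr_ge0; [apply: divr_ge0; lra | apply: OPT_ge0].
Qed.

Lemma algorithm1_unsaturated s (X Y : {set V}) :
  (#|algorithm1 f k (stream s)| < k)%N -> Y \subset ~: prefix_set N1 s ->
  f (Y :|: X) <= f (algorithm1 f k (stream s)) + #|X|%:R * tau1 + #|Y|%:R * tau2.
Proof.
set F := algorithm1 f k (stream s) => lt_k Y_late.
have rejected e : fmarg f e F <= thr (1 + index e (stream s)).
  have := alg1_run_unsaturated fmono fsub (j := index e (stream s)) e _ _ lt_k.
  rewrite nth_index_stream_of; apply; last by rewrite size_stream_of index_stream_of_lt.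
  by have [tau2_le _] := threshold_bounds (1 + index e (stream s)); apply: le_trans tau2_ge0 _.
have addX : f (F :|: X) <= f F + #|X|%:R * tau1.
  apply: f_setU_le_card => // e _; apply: le_trans (rejected e) _.
  by have [] := threshold_bounds (1 + index e (stream s)).
have addY : f ((F :|: X) :|: Y) <= f (F :|: X) + #|Y|%:R * tau2.
  apply: f_setU_le_card => // e /(subsetP Y_late); rewrite !inE -leqNgt => le_e.
  apply: le_trans (fmargS fmono fsub e (subsetUl F X)) _.
  by rewrite -(thresholdE_second (i := 1 + index e (stream s))) ?add1n ?ltnS.
have : f (Y :|: X) <= f ((F :|: X) :|: Y).
  by apply: fmono; rewrite setUC -setUA subsetUr.
lra.
Qed.

Lemma algorithm1_saturated s : #|algorithm1 f k (stream s)| = k ->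
  f (first_phase s) + tau2 * (k%:R - #|first_phase s|%:R) <= f (algorithm1 f k (stream s)).
Proof.
move=> full.
have := @alg1_run_gain _ _ f k #|V| o tau2 (1 + N1) (first_phase s) (drop N1 (stream s)).
rewrite -algorithm1_phases full; apply => j _.
by have [] := threshold_bounds (1 + N1 + j).
Qed.

Lemma dense_card_tau1 (D : {set V}) :
  #|D|%:R <= 5 / (100 * 1000) * k%:R :> R -> #|D|%:R * tau1 <= o / 200.
Proof.
move=> cardD; have k_gt0' := k_gt0_real; have o_ge0 := OPT_ge0.
have -> : o / 200 = 5 / (100 * 1000) * k%:R * tau1 by field; rewrite gt_eqF.
by apply: ler_wpM2r => //; apply: mulr_ge0; [apply: divr_ge0; lra | lra].
Qed.

(* Unsaturated ending: (1/2 + 21/4000) - 1/200 = 1/2 + 25/10^5.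
   Saturated ending: (13/32 - 1/200) + (1/10 - 1/1000) = 1/2 + 25/10^5. *)
Lemma algorithm1_value (D Y : {set V}) s : 0 < o ->
  #|D|%:R <= 5 / (100 * 1000) * k%:R :> R -> Y \subset ~: prefix_set N1 s ->
  13 / 32 * o <= f (D :&: prefix_set N1 s) ->
  (1 / 2 + 21 / 4000) * o <= f (Y :|: D) - tau2 * #|Y|%:R ->
  (1 / 2 + 25 / 10 ^+ 5) * o <= f (algorithm1 f k (stream s)).
Proof.
move=> o_gt0 cardD Y_late first_event second_event; rewrite ten_exp5.
have D_cost := dense_card_tau1 cardD.
have [lt_k|eq_k] := ltnP #|algorithm1 f k (stream s)| k.
  by have := algorithm1_unsaturated D lt_k Y_late; lra.
have full : #|algorithm1 f k (stream s)| = k.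
  by apply/eqP; rewrite eqn_leq eq_k andbT; apply: alg1_run_card; rewrite cards0.
have k_gt0' := k_gt0_real; have := first_phase_prefix D s o_gt0.
have := algorithm1_saturated full; set x := #|first_phase s|%:R.
have tau2_k : tau2 * k%:R = o / 10 by field; rewrite gt_eqF.
have : tau2 * (100 * x) <= tau2 * k%:R.
  by apply: ler_wpM2l (first_phase_small s o_gt0); apply: tau2_ge0.
by rewrite mulrBr tau2_k; lra.
Qed.

Lemma N1_ratio : 900 <= #|V|%:R :> R -> 899 / 1000 <= N1%:R / #|V|%:R :> R.
Proof.
by move=> V_large; have [_ N1_hi] := N1_bounds; rewrite ler_pdivlMr; lra.
Qed.

Lemma second_event_margin (q G W a : R) :
  0 < o -> o - a <= G -> 0 <= W -> W <= o / 10 -> 9 / 100 <= q -> q <= 1 ->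
  99 / 200 * o <= a ->
  1 / 20 * (G - ((1 / 2 + 21 / 4000) * o - a)) <=
  q * (G - W) - ((1 / 2 + 21 / 4000) * o - a).
Proof.
move=> o_gt0 G_ge W_ge0 W_le q_ge q_le a_ge.
have : 0 <= (q - 1 / 20) * (G - (o - a)) by apply: mulr_ge0; lra.
have : 0 <= q * (o / 10 - W) by apply: mulr_ge0; lra.
have : 0 <= (1 - q) * (a - 99 / 200 * o) by apply: mulr_ge0; lra.
have : 0 <= (q - 9 / 100) * o by apply: mulr_ge0; lra.
lra.
Qed.

(* [lra] does not see section hypotheses, hence the local copies below. *)
Section DenseSet.
Variables (D O : {set V}).
Hypotheses (o_gt0 : 0 < o) (D_card : (#|D|%:R : R) <= 5 / (100 * 1000) * k%:R)
  (D_value : 99 / 200 * o <= f D) (O_card : (#|O| <= k)%N) (O_opt : f O = o).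

Definition first_event s := 13 / 32 * o <= f (D :&: prefix_set N1 s).

Definition second_event s :=
  (1 / 2 + 21 / 4000) * o - f D <=
    contraction f D ((O :\: D) :&: ~: prefix_set N1 s)
      - tau2 * #|(O :\: D) :&: ~: prefix_set N1 s|%:R.

Lemma first_and_second_event_good s : first_event s -> second_event s ->
  (1 / 2 + 25 / 10 ^+ 5) * o <= f (algorithm1 f k (stream s)).
Proof.
move=> first second.
apply: (algorithm1_value (D := D) (Y := (O :\: D) :&: ~: prefix_set N1 s)) => //.
  exact: subsetIr.
by move: second; rewrite /second_event /contraction; lra.
Qed.

Lemma miss_rate_bounds (T : {set V}) s0 : D :&: prefix_set N1 s0 = T ->
  9 / 100 <= miss_rate N1 D T :> R /\ miss_rate N1 D T <= 1 :> R.
Proof.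
move=> DP; have [N1_lo _] := N1_bounds; have k_gt0' := k_gt0_real.
have T_le : #|T|%:R <= N1%:R :> R.
  rewrite ler_nat -DP; apply: leq_trans (subset_leq_card (subsetIr _ _)) _.
  by rewrite card_prefix_set // N1_le.
have cardC : #|~: D|%:R = #|V|%:R - #|D|%:R :> R by rewrite -(cardsC D) natrD; ring.
have k_le' : k%:R <= #|V|%:R :> R by rewrite ler_nat.
have D_card' := D_card.
have cardC_gt0 : 0 < #|~: D|%:R :> R by rewrite cardC; lra.
have T_ge0 : 0 <= #|T|%:R :> R by [].
by rewrite /miss_rate ler_pdivlMr // ler_pdivrMr // cardC; split; lra.
Qed.

Lemma second_event_conditional (T : {set V}) :
  1 / 20 * \sum_(s | D :&: prefix_set N1 s == T) (1 : R) <=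
  \sum_(s | (D :&: prefix_set N1 s == T) && second_event s) 1.
Proof.
have [s0 /eqP DP|no_s] := pickP (fun s => D :&: prefix_set N1 s == T); last first.
  by rewrite big_pred0 // mulr0; apply: sumr_ge0.
have [q_ge q_le] := miss_rate_bounds DP.
have QD : O :\: D \subset ~: D by apply/subsetP => x; rewrite !inE => /andP[].
have o_gt0' := o_gt0; have tau2_ge0' := tau2_ge0.
have G_ge : o - f D <= contraction f D (O :\: D).
  rewrite /contraction -O_opt lerD2r; apply: fmono.
  by apply/subsetP => x xO; rewrite !inE xO; case: (x \in D).
have W_le : tau2 * #|O :\: D|%:R <= o / 10.
  have -> : o / 10 = tau2 * k%:R by field; rewrite gt_eqF ?k_gt0_real.
  apply: ler_wpM2l => //; rewrite ler_nat.
  by apply: leq_trans O_card; apply/subset_leq_card/subsetDl.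
have W_ge0 : 0 <= tau2 * #|O :\: D|%:R by apply: mulr_ge0.
apply: (reverse_markov (M := contraction f D (O :\: D))
    (m := miss_rate N1 D T * (contraction f D (O :\: D) - tau2 * #|O :\: D|%:R)))
    => [s _|||].
- have : contraction f D ((O :\: D) :&: ~: prefix_set N1 s) <= contraction f D (O :\: D).
    by rewrite /contraction lerD2r; apply: fmono; apply/setSU/subsetIl.
  have : 0 <= tau2 * #|(O :\: D) :&: ~: prefix_set N1 s|%:R by apply: mulr_ge0.
  lra.
- have samp := sum_contraction_late_ge fmono fsub N1_le T QD.
  rewrite sumrB -mulr_sumr sum_card_late ?N1_le //; lra.
- lra.
- exact: second_event_margin.
Qed.

Lemma first_and_second_events_likely : 900 <= #|V|%:R :> R ->
  1 / 50 * \sum_(s : {perm V}) 1 <= \sum_(s | first_event s && second_event s) (1 : R).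
Proof.
move=> V_large.
have first_likely := prefix_value_likely fmono fsub f0 N1_le (N1_ratio V_large) o_gt0 D_value.
have := sum_condition_fibers (h := fun s => D :&: prefix_set N1 s)
  (E := fun T => 13 / 32 * o <= f T) (fun T _ => second_event_conditional T).
apply: le_trans; move: first_likely; rewrite /=; lra.
Qed.

End DenseSet.

End Analysis.

Theorem mainTheorem5 (R : realFieldType) (V : finType) (f : {set V} -> R) (k : nat) :
  nonneg_set_fun f -> monotone_set_fun f -> submodular f -> normalized f ->
  (0 < k)%N -> (k <= #|V|)%N ->
  (2 * 10 ^+ 8 : R) <= k%:R ->
  (exists D : {set V}, dense f k D) ->
  (1 / 100 : R) <=
    #|[set sigma : {perm V} |
        (1 / 2 + 25 / 10 ^+ 5) * OPT f k <= f (algorithm1 f k (stream_of sigma))]|%:R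
    / #|{: {perm V}}|%:R.
Proof.
move=> f_ge0 fmono fsub f0 k_gt0 k_le k_large [D [D_card D_value]].
apply: card_ratio_ge; first by apply/card_gt0P; exists 1%g.
have o_ge0 := OPT_ge0 k f0.
have [o_eq0|o_neq0] := eqVneq (OPT f k) 0.
  under [X in _ <= X]eq_bigl => s do rewrite o_eq0 mulr0 f_ge0.
  by rewrite ler_piMl ?sumr_ge0 //; lra.
have o_gt0 : 0 < OPT f k by rewrite lt_def o_neq0.
have [O O_card O_opt] := OPT_attained k f_ge0.
have V_large : 900 <= #|V|%:R :> R.
  have : k%:R <= #|V|%:R :> R by rewrite ler_nat.
  by move: k_large; rewrite ten_exp8; lra.
rewrite /Defs.eta ten_exp5 in D_card; rewrite /gamma in D_value.
have D_value' : 99 / 200 * OPT f k <= f D by lra.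
have likely := first_and_second_events_likely fmono fsub f0 k_gt0 k_le o_gt0 D_card D_value'
  O_card O_opt V_large.
apply: le_trans (le_trans _ likely) _; first by apply: ler_wpM2r; [apply: sumr_ge0 | lra].
apply: ler_count_sub => s /andP[first second].
exact: (first_and_second_event_good fmono fsub f0 k_gt0 k_le o_gt0 D_card first second).
Qed.
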